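(* Under the standing assumptions, let $u\in X\setminus\{0\}$, $\zeta\in X^*\setminus\{0\}$ and $\lambda>0$. Then $u$ is a $p$-eigenvector of $J$ with subgradient $\zeta$ and eigenvalue $\lambda$ if and only if $\zeta$ is a $q$-eigenvector of $J^*$ with subgradient $u$ and eigenvalue $\mu=\lambda^{1-q}$.
   Context: Standing assumptions: $X$ is a real reflexive Banach space with dual $X^*$ and duality pairing $\langle\cdot,\cdot\rangle$; $\Gamma_0(X)$ is the class of proper, lower semi-continuous, convex functionals $X\to\mathbb{R}\cup\{+\infty\}$. Fix $1<p<\infty$ and $q=\frac{p}{p-1}$. Let $J\in\Gamma_0(X)$, and let $H\in\Gamma_0(X)$ be absolutely $p$-homogeneous ($H(tu)=|t|^pH(u)$) such that $|u|_H:=(pH(u))^{1/p}$ is a norm on $X$, so $H(u)=\frac1p|u|_H^p$. The dual norm is $|\zeta|_{H^*}=\sup_{u\ne0}\langle\zeta,u\rangle/|u|_H$, and $H^*(\zeta)=\frac1q|\zeta|_{H^*}^q$. The Fenchel conjugate is $J^*(\zeta)=\sup_{u\in X}\langle\zeta,u\rangle-J(u)$ and the subdifferential is $\partial J(u)=\{\zeta\in X^*:\ J(u)+\langle\zeta,v-u\rangle\le J(v)\ \forall v\in X\}$. Growth assumption: there is $c>0$ with $H(u)\le cJ(u)$ for all $u\in X$. The Rayleigh quotient is $R(u)=J(u)/H(u)$ for $u\ne0$ and the dual Rayleigh quotient is $R_*(\zeta)=J^*(\zeta)/H^*(\zeta)$ for $\zeta\ne0$. A $p$-eigenvector of $J$: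 $u\in X\setminus\{0\}$ with subgradient $\zeta\in\partial J(u)$ and eigenvalue $\lambda=R(u)\in\mathbb{R}$ such that $\zeta\in\lambda\,\partial H(u)$. A $q$-eigenvector of $J^*$: $\zeta\in X^*\setminus\{0\}$ with subgradient $u\in\partial J^*(\zeta)$ and eigenvalue $\mu=R_*(\zeta)\in\mathbb{R}$ such that $u\in\mu\,\partial H^*(\zeta)$. *)

From HB Require Import structures.
From mathcomp Require Import all_boot all_order all_algebra.
From mathcomp Require Import all_classical all_reals all_analysis.
Set Implicit Arguments. Unset Strict Implicit. Unset Printing Implicit Defensive.
Import Order.TTheory GRing.Theory Num.Theory.
Import numFieldNormedType.Exports.
Local Open Scope classical_set_scope.
Local Open Scope ring_scope.

(* Elements of X^* are represented as functions X -> R that are linear and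
   continuous; the duality pairing <zeta, u> is application zeta u.         *)
Definition in_dual {R : realType} {X : normedModType R} (zeta : X -> R) : Prop :=
  (forall (a : R) (x y : X), zeta (a *: x + y) = a * zeta x + zeta y)
  /\ continuous zeta.

Definition dual_norm {R : realType} {X : normedModType R} (zeta : X -> R) : R :=
  sup [set `|zeta x| | x in [set x : X | `|x| <= 1]].

Definition reflexive_space {R : realType} (X : normedModType R) : Prop :=
  forall phi : (X -> R) -> R,
    (forall (a : R) (z1 z2 : X -> R), in_dual z1 -> in_dual z2 ->
        phi (fun x => a * z1 x + z2 x) = a * phi z1 + phi z2) ->
    (exists C : R, forall z, in_dual z -> `|phi z| <= C * dual_norm z) ->
    exists u : X, forall z, in_dual z -> phi z = z u.

Local Open Scope ereal_scope.

Definition proper_fun {R : realType} {X : normedModType R} (J : X -> \bar R) : Prop :=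
  (exists u, J u < +oo) /\ (forall u, J u != -oo).

Definition convex_efun {R : realType} {X : normedModType R} (J : X -> \bar R) : Prop :=
  forall (t : R) (u v : X), (0 <= t <= 1)%R ->
    J (((1 - t) *: u + t *: v)%R) <= (1 - t)%R%:E * J u + t%:E * J v.

Definition Gamma0 {R : realType} {X : normedModType R} (J : X -> \bar R) : Prop :=
  proper_fun J /\ lower_semicontinuous J /\ convex_efun J.

Definition fconj {R : realType} {X : normedModType R} (J : X -> \bar R)
    (zeta : X -> R) : \bar R :=
  ereal_sup [set (zeta u)%:E - J u | u in [set: X]].

Definition subdiff {R : realType} {X : normedModType R} (J : X -> \bar R)
    (u : X) (zeta : X -> R) : Prop :=
  in_dual zeta /\ forall v : X, J u + (zeta (v - u)%R)%:E <= J v.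

(* u \in \partial F(zeta) for F : X^* -> R \cup {+oo}, where the subgradients
   live in X^{**}, identified with X by reflexivity *)
Definition subdiff_dual {R : realType} {X : normedModType R}
    (F : (X -> R) -> \bar R) (zeta : X -> R) (u : X) : Prop :=
  forall eta : X -> R, in_dual eta -> F zeta + (eta u - zeta u)%R%:E <= F eta.

Definition rayleigh_is {R : realType} (Ju Hu : \bar R) (lam : R) : Prop :=
  Ju \is a fin_num /\ Hu \is a fin_num /\ Hu != 0 /\ lam = (fine Ju / fine Hu)%R.

Definition p_eigen {R : realType} {X : normedModType R} (J H : X -> \bar R)
    (u : X) (zeta : X -> R) (lam : R) : Prop :=
  (u != 0)%R /\ subdiff J u zeta /\ rayleigh_is (J u) (H u) lam /\
  exists eta : X -> R, subdiff H u eta /\ zeta = (fun x => lam * eta x)%R.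

Definition q_eigen {R : realType} {X : normedModType R} (J H : X -> \bar R)
    (zeta : X -> R) (u : X) (mu : R) : Prop :=
  in_dual zeta /\ zeta <> (fun _ => 0%R) /\ subdiff_dual (fconj J) zeta u /\
  rayleigh_is (fconj J zeta) (fconj H zeta) mu /\
  exists w : X, subdiff_dual (fconj H) zeta w /\ u = (mu *: w)%R.

Definition abs_p_homogeneous {R : realType} {X : normedModType R}
    (p : R) (H : X -> \bar R) : Prop :=
  forall (t : R) (u : X), H (t *: u)%R = (`|t| `^ p)%:E * H u.

Definition H_norm {R : realType} {X : normedModType R} (p : R) (H : X -> \bar R)
    (u : X) : R := ((p * fine (H u)) `^ p^-1)%R.

Definition H_is_norm {R : realType} {X : normedModType R} (p : R)
    (H : X -> \bar R) : Prop :=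
  (forall u, H u \is a fin_num) /\
  (forall u, 0 <= p * fine (H u))%R /\
  (forall u, H_norm p H u = 0%R -> u = 0%R) /\
  (forall (a : R) u, H_norm p H (a *: u)%R = (`|a| * H_norm p H u)%R) /\
  (forall u v, (H_norm p H (u + v)%R <= H_norm p H u + H_norm p H v)%R).

(* Fenchel–Young: if [zeta] is a subgradient of [F] at [u] with [F u] finite, then
   [F^*(zeta) = zeta u - F u], hence [u] is a subgradient of [F^*] at [zeta].  Conversely
   (Fenchel–Moreau), for [F] in Gamma_0 and nonnegative, [u] in the subdifferential of [F^*]
   at [zeta] forces [F u = zeta u - F^*(zeta)] and [zeta] in the subdifferential of [F] at
   [u]; this needs, below every point under the graph of [F], a continuous affine minorant.
   It is obtained from the Hahn–Banach theorem (proved by Zorn's lemma on graphs of partial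
   linear minorants) applied to the convex, Lipschitz envelope
   [x |-> inf_y F y + k |x - y|], which for [k] large lies above the given point by lower
   semicontinuity.

   For [p]-homogeneous [H], the subgradients of [H] at [a u] are [a^(p-1)] times those at
   [u].  If [zeta = lam eta] with [eta] a subgradient of [H] at [u], then [zeta] is a
   subgradient of [H] at [a u] for [a = lam^(q-1)], and Fenchel–Young gives
   [J^*(zeta) = lam (eta u - H u)] and [H^*(zeta) = lam^q (eta u - H u)], where
   [eta u > H u] because [H (u/2) < H u / 2]; so [R_*(zeta) = lam^(1-q)] and
   [u = lam^(1-q) (a u)].  The converse runs the same computation backwards through
   Fenchel–Moreau. *)

From HB Require Import structures.
From mathcomp Require Import all_boot all_order all_algebra.
From mathcomp Require Import all_classical all_reals all_analysis.
From mathcomp Require Import ring lra.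
Import Order.TTheory GRing.Theory Num.Theory.
Import numFieldNormedType.Exports.
Local Open Scope classical_set_scope.
Local Open Scope ring_scope.

Set Implicit Arguments. Unset Strict Implicit.

Definition linear_fun (R : pzRingType) (V : lmodType R) (f : V -> R) :=
  forall (a : R) (x y : V), f (a *: x + y) = a * f x + f y.

Section LinearFun.
Variables (R : pzRingType) (V : lmodType R) (f : V -> R).
Hypothesis f_linear : linear_fun f.

Lemma linear_fun0 : f 0 = 0.
Proof.
have := f_linear 1 0 0; rewrite scale1r addr0 mul1r => f00.
by apply: (addrI (f 0)); rewrite addr0 -f00.
Qed.

Lemma linear_funN x : f (- x) = - f x.
Proof. by rewrite -scaleN1r -[_ *: x]addr0 f_linear linear_fun0 addr0 mulN1r. Qed.

Lemma linear_funB x y : f (x - y) = f x - f y.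
Proof. by rewrite -[x]scale1r f_linear mul1r linear_funN scale1r. Qed.

Lemma linear_funZ a x : f (a *: x) = a * f x.
Proof. by rewrite -[_ *: x]addr0 f_linear linear_fun0 addr0. Qed.

End LinearFun.

Section HahnBanach.
Variables (R : realType) (V : lmodType R) (q : V -> R).
Hypothesis q0 : q 0 = 0.
Hypothesis q_convex : forall (t : R) x y, 0 <= t <= 1 ->
  q ((1 - t) *: x + t *: y) <= (1 - t) * q x + t * q y.

Definition linear_minorant_graph (G : set (V * R)) :=
  [/\ forall x a b, G (x, a) -> G (x, b) -> a = b,
      forall s x a y b, G (x, a) -> G (y, b) -> G (s *: x + y, s * a + b) &
      forall x a, G (x, a) -> a <= q x].

Lemma linear_minorant_graph_bigcup (F : set (set (V * R))) :
  F `<=` linear_minorant_graph -> total_on F subset ->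
  linear_minorant_graph (\bigcup_(G in F) G).
Proof.
move=> FP tot; split.
- move=> x a b [G1 FG1 G1a] [G2 FG2 G2b].
  have [s12|s21] := tot _ _ FG1 FG2.
  + by have [f _ _] := FP _ FG2; apply: f (s12 _ G1a) G2b.
  + by have [f _ _] := FP _ FG1; apply: f G1a (s21 _ G2b).
- move=> s x a y b [G1 FG1 G1a] [G2 FG2 G2b].
  have [s12|s21] := tot _ _ FG1 FG2.
  + by exists G2 => //; have [_ l _] := FP _ FG2; apply: l (s12 _ G1a) G2b.
  + by exists G1 => //; have [_ l _] := FP _ FG1; apply: l G1a (s21 _ G2b).
- by move=> x a [G FG Ga]; have [_ _ d] := FP _ FG; apply: d.
Qed.

Section Graph.
Variable G : set (V * R).
Hypothesis GG : linear_minorant_graph G.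

Lemma linear_minorant_graph0 x a : G (x, a) -> G (0, 0).
Proof.
move=> Gxa; have [_ Gl _] := GG.
by have := Gl (-1) _ _ _ _ Gxa Gxa; rewrite scaleN1r addNr mulN1r addNr.
Qed.

Lemma linear_minorant_graph_comb s t x a y b : G (x, a) -> G (y, b) ->
  G (s *: x + t *: y, s * a + t * b).
Proof.
move=> Gxa Gyb; have [_ Gl _] := GG; apply: (Gl) => //.
by have := Gl t _ _ _ _ Gyb (linear_minorant_graph0 Gxa); rewrite !addr0.
Qed.

(* Convexity of [q] on the segment from [y - t x0] to [y' + s x0], whose point of weight
   [t / (s + t)] lies in the domain of [G]. *)
Lemma linear_minorant_graph_gap x0 y b y' b' t s : G (y, b) -> G (y', b') ->
  0 < t -> 0 < s -> (b - q (y - t *: x0)) / t <= (q (y' + s *: x0) - b') / s.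
Proof.
move=> Gyb Gyb' t0 s0; have [_ _ Gq] := GG.
rewrite ler_pdivrMr // mulrAC ler_pdivlMr //.
have st0 : 0 < s + t by rewrite addr_gt0.
have stK z w : (s + t) * (z / (s + t) * w) = z * w.
  by rewrite mulrA [_ * (z / _)]mulrC divfK ?gt_eqF.
pose th := t / (s + t).
have th01 : 0 <= th <= 1.
  by rewrite /th divr_ge0 ?(ltW t0) ?(ltW st0) //= ler_pdivrMr // mul1r lerDr ltW.
have thC : 1 - th = s / (s + t).
  by rewrite /th; field; rewrite lt0r_neq0.
have := q_convex (y - t *: x0) (y' + s *: x0) th01.
have -> : (1 - th) *: (y - t *: x0) + th *: (y' + s *: x0) = (1 - th) *: y + th *: y'.
  have thst : th * s = (1 - th) * t by rewrite thC /th; ring.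
  by rewrite !scalerDr !scalerN !scalerA thst addrACA addNr addr0.
move/(le_trans (Gq _ _ (linear_minorant_graph_comb (1 - th) th Gyb Gyb'))).
move/(ler_wpM2l (ltW st0)); rewrite !mulrDr thC /th !stK.
nra.
Qed.

Lemma linear_minorant_graph_slope x0 : G (0, 0) ->
  exists c, forall y b t, G (y, b) -> b + t * c <= q (y + t *: x0).
Proof.
move=> G00; have [_ _ Gq] := GG.
pose L := [set l | exists y b t, [/\ G (y, b), 0 < t & l = (b - q (y - t *: x0)) / t]].
have L0 : L (- q (- x0)).
  by exists 0, 0, 1; rewrite scale1r divr1 sub0r add0r.
have LU y b s r : G (y, b) -> 0 < s -> L r -> r <= (q (y + s *: x0) - b) / s.
  by move=> Gyb s0 [y' [b' [t [Gyb' t0 ->]]]]; apply: linear_minorant_graph_gap.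
have Lub : has_ubound L.
  by exists (q x0) => r /(LU _ _ _ _ G00 ltr01); rewrite scale1r add0r subr0 divr1.
exists (sup L) => y b t Gyb.
have [t0|t0|->] := ltgtP t 0; last by rewrite mul0r scale0r !addr0; apply: Gq.
- have : L ((b - q (y - (- t) *: x0)) / (- t)) by exists y, b, (- t); rewrite oppr_gt0.
  move/(ub_le_sup Lub); rewrite scaleNr opprK ler_pdivrMr ?oppr_gt0 // mulrN.
  lra.
- have : sup L <= (q (y + t *: x0) - b) / t.
    by apply: ge_sup => [|r]; [exists (- q (- x0)) | exact: LU].
  rewrite ler_pdivlMr //; lra.
Qed.

Definition adjoin_graph x0 c : set (V * R) :=
  [set z | exists y b t, G (y, b) /\ z = (y + t *: x0, b + t * c)].

Lemma linear_minorant_adjoin_graph x0 c : G (0, 0) -> (forall a, ~ G (x0, a)) ->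
  (forall y b t, G (y, b) -> b + t * c <= q (y + t *: x0)) ->
  linear_minorant_graph (adjoin_graph x0 c).
Proof.
move=> G00 nG0 Gc; have [Gf Gl _] := GG; split.
- move=> x a a' [y1 [b1 [t1 [G1 [-> ->]]]]] [y2 [b2 [t2 [G2 [e ->]]]]].
  have [et|t12] := eqVneq t1 t2.
    rewrite -et in e *; have ey : y1 = y2 by apply: (addIr (t1 *: x0)).
    by rewrite -ey in G2; rewrite (Gf _ _ _ G1 G2).
  exfalso; apply: (nG0 ((t1 - t2)^-1 * b2 - (t1 - t2)^-1 * b1)).
  have -> : x0 = (t1 - t2)^-1 *: y2 - (t1 - t2)^-1 *: y1.
    have -> : y2 = y1 + (t1 - t2) *: x0 by rewrite scalerBl addrA e addrK.
    by rewrite -scalerBr addrAC subrr add0r scalerA mulVf ?scale1r // subr_eq0.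
  by rewrite -scaleNr -mulNr; apply: linear_minorant_graph_comb.
- move=> s x a y b [y1 [b1 [t1 [G1 [-> ->]]]]] [y2 [b2 [t2 [G2 [-> ->]]]]].
  exists (s *: y1 + y2), (s * b1 + b2), (s * t1 + t2); split; first exact: Gl.
  congr (_, _); first by rewrite scalerDr scalerDl scalerA addrACA.
  by ring.
- by move=> x a [y [b [t [Gyb [-> ->]]]]]; apply: Gc.
Qed.

Lemma adjoin_graph_proper x0 c : G (0, 0) -> (forall a, ~ G (x0, a)) ->
  G `<` adjoin_graph x0 c.
Proof.
move=> G00 nG0; split.
  by move=> [x a] Gxa; exists x, a, 0; rewrite scale0r mul0r !addr0.
move=> /(_ (x0, c)) Gx0; apply: (nG0 c); apply: Gx0.
by exists 0, 0, 1; rewrite scale1r mul1r !add0r.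
Qed.

End Graph.

Lemma convex_linear_minorant : exists f : V -> R, linear_fun f /\ forall x, f x <= q x.
Proof.
have [A [AA Amax]] := Zorn_bigcup linear_minorant_graph_bigcup.
have [Af Al Aq] := AA.
have A00 : A (0, 0).
  apply: contrapT => nA00; apply: (Amax [set (0, 0)]).
    split=> [z Az|/(_ (0, 0) erefl)//].
    by case: nA00; case: z Az => x a; apply: linear_minorant_graph0.
  split=> [x a b [_ ->] [_ ->] //|s x a y b [-> ->] [-> ->]|x a [-> ->]].
    by rewrite scaler0 mulr0 !addr0.
  by rewrite q0.
have Adom x : exists a, A (x, a).
  apply: contrapT => nAx; have nA a : ~ A (x, a) by move=> Axa; apply: nAx; exists a.
  have [c Ac] := linear_minorant_graph_slope AA x A00.
  apply: (Amax (adjoin_graph A x c)); first exact: adjoin_graph_proper.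
  exact: linear_minorant_adjoin_graph.
pose f x := projT1 (cid (Adom x)).
have Afx x : A (x, f x) by rewrite /f; case: cid.
exists f; split=> [a x y|x]; last exact: Aq.
by apply: Af (Afx _) _; apply: Al.
Qed.

End HahnBanach.

Lemma linear_fun_bounded_in_dual (R : realType) (X : normedModType R) (f : X -> R) (k : R) :
  0 < k -> linear_fun f -> (forall x, f x <= k * `|x|) -> in_dual f.
Proof.
move=> k0 fl fk; split=> // x.
have fa y : `|f y| <= k * `|y|.
  by rewrite ler_norml fk andbT lerNl -(linear_funN fl) -normrN fk.
apply/cvgrPdist_le => e e0; apply/nbhs_ballP; exists (e / k) => /=.
  by rewrite divr_gt0.
move=> y; rewrite -ball_normE /ball_ /= => xy.
have := fa (x - y); rewrite (linear_funB fl) => /le_trans; apply.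
by have := ltW xy; rewrite ler_pdivlMr // mulrC.
Qed.

Section LipschitzEnvelope.
Variables (R : realType) (X : normedModType R) (F : X -> \bar R).
Hypothesis F_ge0 : forall x, (0 <= F x)%E.
Hypothesis F_dom : exists y, (F y < +oo)%E.

Definition lipschitz_envelope (k : R) (x : X) : R :=
  inf [set fine (F y) + k * `|x - y| | y in [set y | F y \is a fin_num]].

Let envelope_set k x :=
  [set fine (F y) + k * `|x - y| | y in [set y | F y \is a fin_num]].

Let envelope_set_nonempty k x : envelope_set k x !=set0.
Proof.
by case: F_dom => y Fy; exists (fine (F y) + k * `|x - y|), y; rewrite //= ge0_fin_numE.
Qed.

Section Slope.
Variable k : R.
Hypothesis k_gt0 : 0 < k.

Let envelope_set_lbound x : has_lbound (envelope_set k x).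
Proof.
exists 0 => _ [y _ <-].
by rewrite addr_ge0 ?fine_ge0 // mulr_ge0 // ltW.
Qed.

Lemma lipschitz_envelope_le x y : F y \is a fin_num ->
  lipschitz_envelope k x <= fine (F y) + k * `|x - y|.
Proof. by move=> Fy; apply: ge_inf; [exact: envelope_set_lbound | exists y]. Qed.

Lemma lipschitz_envelope_lipschitz x x' :
  lipschitz_envelope k x <= lipschitz_envelope k x' + k * `|x - x'|.
Proof.
rewrite -lerBlDr; apply: lb_le_inf; first exact: envelope_set_nonempty.
move=> _ [y Fy <-]; rewrite lerBlDr.
apply: le_trans (lipschitz_envelope_le x Fy) _.
by rewrite -addrA lerD2l -mulrDr ler_pM2l // [_ + `|x - x'|]addrC ler_distD.
Qed.

Hypothesis F_convex : convex_efun F.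

Lemma lipschitz_envelope_convex (t : R) x1 x2 : 0 <= t <= 1 ->
  lipschitz_envelope k ((1 - t) *: x1 + t *: x2) <=
  (1 - t) * lipschitz_envelope k x1 + t * lipschitz_envelope k x2.
Proof.
move=> t01; have /andP[t0 t1] := t01; have t1' : 0 <= 1 - t by rewrite subr_ge0.
apply/ler_addgt0Pr => e e0.
have adherent x := inf_adherent e0 (conj (envelope_set_nonempty k x) (envelope_set_lbound x)).
have [_ [y1 Fy1 <-] h1] := adherent x1; have [_ [y2 Fy2 <-] h2] := adherent x2.
set y := (1 - t) *: y1 + t *: y2.
have Fy : (F y <= ((1 - t) * fine (F y1) + t * fine (F y2))%:E)%E.
  by rewrite EFinD !EFinM !fineK //; apply: F_convex.
have Fyfin : F y \is a fin_num.
  by rewrite ge0_fin_numE //; apply: le_lt_trans Fy _; apply: ltey.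
have Fyr : fine (F y) <= (1 - t) * fine (F y1) + t * fine (F y2).
  by rewrite -lee_fin fineK.
have dist_y : `|(1 - t) *: x1 + t *: x2 - y| <= (1 - t) * `|x1 - y1| + t * `|x2 - y2|.
  rewrite /y opprD addrACA -!scalerBr; apply: le_trans (ler_normD _ _) _.
  by rewrite !normrZ !ger0_norm.
apply: le_trans (lipschitz_envelope_le _ Fyfin) _.
have := ler_wpM2l (ltW k_gt0) dist_y.
have := ler_wpM2l t1' (ltW h1); have := ler_wpM2l t0 (ltW h2).
nra.
Qed.

End Slope.

(* Near [u], [F > s] by lower semicontinuity; away from [u], the penalty [k |u - y|]
   exceeds [|s| + 1]. *)
Lemma lsc_lipschitz_envelope_ge (u : X) (s : R) : lower_semicontinuous F ->
  (s%:E < F u)%E -> exists2 k, 0 < k & s <= lipschitz_envelope k u.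
Proof.
move=> F_lsc su; have [V Vu FV] := F_lsc _ _ su.
have /nbhs_ballP [d /= d0 dV] := Vu.
have s1 : 0 < `|s| + 1 by rewrite ltr_pwDr.
exists ((`|s| + 1) / d); first by rewrite divr_gt0.
apply: lb_le_inf; first exact: envelope_set_nonempty.
move=> _ [y /= Fy <-].
have [uy|uy] := ltP `|u - y| d.
- have : (s%:E < F y)%E by apply: FV; apply: dV; rewrite -ball_normE /ball_.
  rewrite -(fineK Fy) lte_fin => /ltW sF.
  by rewrite -[s]addr0 lerD // mulr_ge0 // divr_ge0 ?ltW.
- have : `|s| + 1 <= (`|s| + 1) / d * `|u - y|.
    by rewrite mulrAC ler_pdivlMr // ler_pM2l.
  have := fine_ge0 (F_ge0 y); have := ler_norm s; lra.
Qed.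

Lemma lsc_convex_affine_minorant (u : X) (s : R) :
  lower_semicontinuous F -> convex_efun F -> (s%:E < F u)%E ->
  exists eta : X -> R, in_dual eta /\ forall v, ((s + eta (v - u))%:E <= F v)%E.
Proof.
move=> F_lsc F_convex su; have [k k0 sk] := lsc_lipschitz_envelope_ge F_lsc su.
pose q x := lipschitz_envelope k (u + x) - lipschitz_envelope k u.
have q0 : q 0 = 0 by rewrite /q addr0 subrr.
have q_convex (t : R) x y : 0 <= t <= 1 ->
    q ((1 - t) *: x + t *: y) <= (1 - t) * q x + t * q y.
  move=> t01; rewrite /q.
  have -> : u + ((1 - t) *: x + t *: y) = (1 - t) *: (u + x) + t *: (u + y).
    by rewrite !scalerDr addrACA -scalerDl subrK scale1r.
  have := lipschitz_envelope_convex k0 F_convex (u + x) (u + y) t01; lra.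
have [f [fl fq]] := convex_linear_minorant q0 q_convex.
exists f; split.
  apply: (linear_fun_bounded_in_dual k0 fl) => x; apply: le_trans (fq x) _.
  rewrite /q lerBlDl; have := lipschitz_envelope_lipschitz k0 (u + x) u.
  by rewrite addrAC subrr add0r.
move=> v; have := F_ge0 v; case Fv : (F v) => [r| |] // _; last exact: leey.
have Fv_fin : F v \is a fin_num by rewrite Fv.
have := lipschitz_envelope_le k0 v Fv_fin; rewrite Fv subrr normr0 mulr0 addr0 /= => rv.
have := fq (v - u); rewrite /q addrCA subrr addr0 lee_fin; lra.
Qed.

End LipschitzEnvelope.

Section FenchelConjugate.
Variables (R : realType) (X : normedModType R) (F : X -> \bar R).

Lemma fenchel_young (zeta : X -> R) v : ((zeta v)%:E - F v <= fconj F zeta)%E.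
Proof. by apply: ereal_sup_ubound; exists v. Qed.

Lemma fconj_fin_minorant (zeta : X -> R) c v :
  fconj F zeta = c%:E -> ((zeta v - c)%:E <= F v)%E.
Proof.
move=> Fc; have := fenchel_young zeta v; rewrite Fc.
case: (F v) => [r| |] //=; last by rewrite leey.
by rewrite -EFinB !lee_fin => ?; lra.
Qed.

Lemma fconj_le_affine_minorant (eta : X -> R) u s : linear_fun eta ->
  (forall v, ((s + eta (v - u))%:E <= F v)%E) -> (fconj F eta <= (eta u - s)%:E)%E.
Proof.
move=> el Fmin; apply: ge_ereal_sup => _ [v _ <-].
have := Fmin v; case: (F v) => [r| |] //=; last by rewrite leNye.
by rewrite -EFinB !lee_fin (linear_funB el) => ?; lra.
Qed.

Lemma subdiff_fconj_eq (zeta : X -> R) u : subdiff F u zeta -> F u \is a fin_num ->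
  fconj F zeta = (zeta u - fine (F u))%:E.
Proof.
move=> [[zl _] Fsub] Fu; apply/le_anti/andP; split; last first.
  by rewrite EFinB fineK //; apply: fenchel_young.
apply: ge_ereal_sup => _ [v _ <-].
have := Fsub v; rewrite -(fineK Fu).
case: (F v) => [r| |] //=; last by rewrite leNye.
by rewrite -EFinD -EFinB !lee_fin (linear_funB zl) => ?; lra.
Qed.

Lemma subdiff_fconj (zeta : X -> R) u : subdiff F u zeta -> F u \is a fin_num ->
  subdiff_dual (fconj F) zeta u.
Proof.
move=> Fsub Fu eta _; rewrite (subdiff_fconj_eq Fsub Fu).
apply: le_trans (fenchel_young eta u).
by rewrite -(fineK Fu) -EFinD -EFinB lee_fin; lra.
Qed.

Lemma fconj_eq_subdiff (zeta : X -> R) u c : in_dual zeta ->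
  fconj F zeta = c%:E -> F u = (zeta u - c)%:E -> subdiff F u zeta.
Proof.
move=> [zl zc] Fc Fu; split=> // v; rewrite Fu -EFinD.
apply: le_trans (fconj_fin_minorant v Fc).
by rewrite lee_fin (linear_funB zl); lra.
Qed.

End FenchelConjugate.

Section FenchelMoreau.
Variables (R : realType) (X : normedModType R) (F : X -> \bar R).
Hypothesis F_ge0 : forall x, (0 <= F x)%E.
Hypothesis F_Gamma0 : Gamma0 F.

Lemma subdiff_dual_fconj_eq (zeta : X -> R) u :
  fconj F zeta \is a fin_num -> subdiff_dual (fconj F) zeta u ->
  F u = (zeta u - fine (fconj F zeta))%:E.
Proof.
have [[Fdom _] [Flsc Fconvex]] := F_Gamma0.
move=> Ffin Fsub; set c := fine (fconj F zeta).
have Fc : fconj F zeta = c%:E by rewrite /c fineK.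
have below s : (s%:E < F u)%E -> s <= zeta u - c.
  move=> /(lsc_convex_affine_minorant F_ge0 Fdom Flsc Fconvex) [eta [[el ec] Fmin]].
  have := le_trans (Fsub eta (conj el ec)) (fconj_le_affine_minorant el Fmin).
  by rewrite Fc -EFinD lee_fin; lra.
apply/le_anti; rewrite (fconj_fin_minorant _ Fc) andbT.
case Fu: (F u) => [r| |]; last exact: leNye.
- rewrite lee_fin leNgt; apply/negP => cr.
  have : (((zeta u - c + r) / 2)%R%:E < F u)%E by rewrite Fu lte_fin; lra.
  by move/below; lra.
- have : ((zeta u - c + 1)%R%:E < F u)%E by rewrite Fu ltry.
  by move/below; rewrite gerDl ler10.
Qed.

Lemma subdiff_dual_fconj (zeta : X -> R) u : in_dual zeta ->
  fconj F zeta \is a fin_num -> subdiff_dual (fconj F) zeta u -> subdiff F u zeta.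
Proof.
move=> dz Ffin Fsub.
exact: fconj_eq_subdiff dz (esym (fineK Ffin)) (subdiff_dual_fconj_eq Ffin Fsub).
Qed.

End FenchelMoreau.

Lemma gt1r_powR (R : realType) (a r : R) : 0 < a < 1 -> 1 < r -> a `^ r < a.
Proof.
move=> /andP[a0 a1] r1; have la : ln a < 0 by rewrite ln_lt0 // a0.
by rewrite /powR gt_eqF // -[X in _ < X](@lnK _ a) ?posrE // ltr_expR; nra.
Qed.

Section Homogeneous.
Variables (R : realType) (X : normedModType R) (p : R) (H : X -> \bar R).
Hypothesis H_hom : abs_p_homogeneous p H.
Hypothesis H_fin : forall u, H u \is a fin_num.

Lemma homogeneous_fineZ (a : R) u : 0 < a -> fine (H (a *: u)) = a `^ p * fine (H u).
Proof. by move=> a0; rewrite H_hom -(fineK (H_fin u)) -EFinM gtr0_norm. Qed.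

Lemma subdiff_homogeneousZ (a : R) w eta : 0 < a -> subdiff H w eta ->
  subdiff H (a *: w) (fun x => a `^ (p - 1) * eta x).
Proof.
move=> a0 [[el ec] Hsub]; split.
  by split=> [b x y|x]; [rewrite el; ring | apply: cvgMl_tmp; exact: ec].
move=> v; have := Hsub (a^-1 *: v).
rewrite -(fineK (H_fin v)) -(fineK (H_fin w)) -(fineK (H_fin (a *: w))) -EFinD.
rewrite -(fineK (H_fin (a^-1 *: v))) -EFinD !lee_fin !homogeneous_fineZ ?invr_gt0 //.
have -> : a^-1 *: v - w = a^-1 *: (v - a *: w).
  by rewrite scalerBr scalerA mulVf ?gt_eqF // scale1r.
rewrite (linear_funZ el) => /(ler_wpM2l (powR_ge0 a p)).
have ap_inv : a `^ p * a^-1 `^ p = 1.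
  by rewrite -powRM ?invr_ge0 ?ltW // mulfV ?gt_eqF // powR1.
have ap_pm1 : a `^ (p - 1) = a `^ p * a^-1.
  by rewrite powRB ?powRr1 ?ltW // (gt_eqF a0) implybT.
by rewrite mulrDr !mulrA ap_inv mul1r ap_pm1.
Qed.

Lemma subdiff_homogeneous_gt u eta : 1 < p -> 0 < fine (H u) -> subdiff H u eta ->
  fine (H u) < eta u.
Proof.
move=> p1 Hu [[el _] Hsub]; have := Hsub (2^-1 *: u).
rewrite -(fineK (H_fin u)) -(fineK (H_fin (2^-1 *: u))) -EFinD lee_fin.
rewrite homogeneous_fineZ ?invr_gt0 //.
rewrite (linear_funB el) (linear_funZ el) => Hhalf.
have : 2^-1 `^ p < (2^-1 : R).
  by apply: gt1r_powR p1; apply/andP; split; lra.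
rewrite -(ltr_pM2r Hu) => ?; lra.
Qed.

End Homogeneous.

Section Eigen.
Variables (R : realType) (X : normedModType R) (p : R) (J H : X -> \bar R).
Hypothesis p_gt1 : 1 < p.
Hypothesis H_hom : abs_p_homogeneous p H.
Hypothesis H_fin : forall u, H u \is a fin_num.
Variables (u : X) (zeta : X -> R) (lam : R).
Hypothesis Hu_gt0 : 0 < fine (H u).
Hypothesis lam_gt0 : 0 < lam.

Let pm1_neq0 : p - 1 != 0. Proof. by rewrite subr_eq0 gt_eqF. Qed.
Let lam_neq0 : lam != 0. Proof. exact: lt0r_neq0. Qed.

Lemma p_eigen_q_eigen : zeta <> (fun=> 0) -> p_eigen J H u zeta lam ->
  q_eigen J H zeta u (lam `^ (1 - p / (p - 1))).
Proof.
move=> zeta0 [_ [Jsub [[Jfin [_ [_ lamE]]] [eta [Hsub zetaE]]]]].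
have dz : in_dual zeta := Jsub.1.
set q := p / (p - 1).
pose a := lam `^ (q - 1).
have a_gt0 : 0 < a by apply: powR_gt0.
have a_pm1 : a `^ (p - 1) = lam.
  by rewrite -powRrM (_ : _ * _ = 1) ?powRr1 ?ltW //; rewrite /q; field.
have a_p : a `^ p = lam `^ q by rewrite -powRrM (_ : _ * _ = q) //; rewrite /q; field.
have lam_a : lam * a = lam `^ q.
  by rewrite -{1}(powRr1 (ltW lam_gt0)) -powRD ?lam_neq0 ?implybT // addrC subrK.
have Hsub_a : subdiff H (a *: u) zeta.
  by have := subdiff_homogeneousZ H_hom H_fin a_gt0 Hsub; rewrite a_pm1 -zetaE.
have zeta_u : zeta u = lam * eta u by rewrite zetaE.
have Ju : fine (J u) = lam * fine (H u) by rewrite lamE divfK ?gt_eqF.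
have zeta_au : zeta (a *: u) = lam `^ q * eta u.
  by rewrite (linear_funZ dz.1) zeta_u mulrA [a * _]mulrC lam_a.
have Hau : fine (H (a *: u)) = lam `^ q * fine (H u).
  by rewrite (homogeneous_fineZ H_hom) // a_p.
have gap : 0 < eta u - fine (H u).
  by rewrite subr_gt0 (subdiff_homogeneous_gt H_hom).
have Jconj : fconj J zeta = (lam * (eta u - fine (H u)))%:E.
  by rewrite (subdiff_fconj_eq Jsub Jfin) zeta_u Ju mulrBr.
have Hconj : fconj H zeta = (lam `^ q * (eta u - fine (H u)))%:E.
  by rewrite (subdiff_fconj_eq Hsub_a (H_fin _)) zeta_au Hau mulrBr.
split=> //; split=> //; split; first exact: subdiff_fconj.
split.
  rewrite Jconj Hconj; split=> //; split=> //; split.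
    by rewrite eqe mulf_neq0 ?lt0r_neq0 ?powR_gt0.
  rewrite /= -mulf_div divff ?mulr1 ?gt_eqF //.
  by rewrite powRB ?lam_neq0 ?implybT // powRr1 ?ltW.
exists (a *: u); split; first exact: subdiff_fconj Hsub_a (H_fin _).
by rewrite scalerA -powRD ?lam_neq0 ?implybT // subrKA subrr powRr0 scale1r.
Qed.

Hypothesis u_neq0 : u != 0.

Lemma q_eigen_p_eigen : Gamma0 J -> Gamma0 H ->
  (forall x, 0 <= J x)%E -> (forall x, 0 <= H x)%E ->
  q_eigen J H zeta u (lam `^ (1 - p / (p - 1))) -> p_eigen J H u zeta lam.
Proof.
move=> GJ GH J_ge0 H_ge0 [dz [_ [Jsub [[Jfin [Hfin [Hconj0 muE]]] [w [Hsub uE]]]]]].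
set q := p / (p - 1) in muE uE *; set mu := lam `^ (1 - q) in muE uE *.
have mu_gt0 : 0 < mu by apply: powR_gt0.
have Ju := subdiff_dual_fconj_eq J_ge0 GJ Jfin Jsub.
have Hw := subdiff_dual_fconj_eq H_ge0 GH Hfin Hsub.
have Hsub_w := subdiff_dual_fconj H_ge0 GH dz Hfin Hsub.
have Jsub_u := subdiff_dual_fconj J_ge0 GJ dz Jfin Jsub.
set cJ := fine (fconj J zeta) in muE Ju *; set cH := fine (fconj H zeta) in muE Hw *.
have cH_neq0 : cH != 0.
  by apply: contra Hconj0 => /eqP cH0; rewrite -(fineK Hfin) -/cH cH0.
have cJE : cJ = mu * cH by rewrite muE divfK.
have Hu_w : fine (H u) = mu `^ p * fine (H w) by rewrite uE (homogeneous_fineZ H_hom).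
have Ju_w : fine (J u) = mu * fine (H w).
  by rewrite Ju Hw /= uE (linear_funZ dz.1) cJE; ring.
have Hw_neq0 : fine (H w) != 0.
  by apply: contraTneq Hu_gt0 => Hw0; rewrite Hu_w Hw0 mulr0 ltxx.
have mu_pm1 : mu `^ (p - 1) = lam^-1.
  by rewrite -powRrM (_ : _ * _ = -1) ?powR_inv1 ?ltW //; rewrite /q; field.
have mu_p : mu / mu `^ p = lam.
  rewrite -[X in X / _](powRr1 (ltW mu_gt0)) -powRB ?(lt0r_neq0 mu_gt0) ?implybT //.
  by rewrite -powRrM (_ : _ * _ = 1) ?powRr1 ?ltW //; rewrite /q; field.
split=> //; split=> //; split.
  split; first by rewrite Ju.
  split; first exact: H_fin.
  split; first by rewrite -(fineK (H_fin u)) eqe gt_eqF.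
  by rewrite Ju_w Hu_w -mulf_div divff // mulr1 mu_p.
exists (fun x => lam^-1 * zeta x); split.
  by rewrite uE -mu_pm1; apply: subdiff_homogeneousZ.
by apply: funext => x; rewrite mulrA mulfV // mul1r.
Qed.

End Eigen.

Section HNorm.
Variables (R : realType) (X : normedModType R) (p : R) (H : X -> \bar R).
Hypotheses (p_gt0 : 0 < p) (Hnorm : H_is_norm p H).

Lemma H_is_norm_ge0 u : (0 <= H u)%E.
Proof.
have [H_fin [H_ge0 _]] := Hnorm.
by rewrite -(fineK (H_fin u)) lee_fin -(pmulr_rge0 _ p_gt0).
Qed.

Lemma H_is_norm_gt0 u : u != 0 -> 0 < fine (H u).
Proof.
move=> u_neq0; have [_ [H_ge0 [H_def _]]] := Hnorm.
rewrite lt_neqAle -(pmulr_rge0 _ p_gt0) H_ge0 andbT.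
apply/eqP => Hu0; move/eqP: u_neq0; apply; apply: H_def.
by rewrite /H_norm -Hu0 mulr0 powR0 // invr_neq0 // gt_eqF.
Qed.

End HNorm.

Unset Implicit Arguments. Set Strict Implicit.

Theorem theorem2p1 (R : realType) (X : completeNormedModType R)
  (p : R) (J H : X -> \bar R) (c : R) (u : X) (zeta : X -> R) (lam : R) :
  reflexive_space X ->
  1 < p ->
  Gamma0 J -> Gamma0 H ->
  abs_p_homogeneous p H -> H_is_norm p H ->
  0 < c -> (forall v : X, (H v <= c%:E * J v)%E) ->
  u != 0 -> in_dual zeta -> zeta <> (fun _ => 0) -> 0 < lam ->
  (p_eigen J H u zeta lam <->
   q_eigen J H zeta u (lam `^ (1 - p / (p - 1)))).
Proof.
(* Reflexivity is built into [subdiff_dual], whose subgradients are taken in [X]. *)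
move=> _ p_gt1 GJ GH H_hom Hnorm c_gt0 H_le_cJ u_neq0 _ zeta_neq0 lam_gt0.
have p_gt0 : 0 < p by apply: lt_trans p_gt1.
have H_fin := Hnorm.1.
have H_ge0 := H_is_norm_ge0 p_gt0 Hnorm.
have J_ge0 v : (0 <= J v)%E.
  have := le_trans (H_ge0 v) (H_le_cJ v).
  case: (J v) => [r| |] //; last by rewrite gt0_muleNy ?lte_fin.
  by rewrite -EFinM lee_fin pmulr_rge0.
have Hu_gt0 := H_is_norm_gt0 p_gt0 Hnorm u_neq0.
by split; [apply: p_eigen_q_eigen | apply: q_eigen_p_eigen].
Qed.
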